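(* Let $f$ be a Boolean function with $s={\rm psize}(f)\ge1$ that is equivalent to a depth-$d$ decision tree. Then the zero-depth of $T_f$ is at most $d\ln s+1$.
   Context: Every Boolean function has a unique representation as a sum over $\mathbb{F}_2$ of distinct monomials; ${\rm psize}(f)$ is the number of non-constant monomials in it. A decision tree computes a Boolean function by following from the root, at an internal node labeled $x_i$, the 0-child (left) if $x_i=0$ and the 1-child (right) if $x_i=1$, outputting the 0/1 leaf label; its depth is the maximum number of edges on a root-to-leaf path. For a Boolean function $f$, the decision tree $T_f$ is defined recursively: if $f$ is constant $\xi$, $T_f$ is a leaf labeled $\xi$; otherwise the root is labeled by $x_i$ where $i$ is the smallest index among those minimizing ${\rm psize}(f_{|x_i\gets0})$, its left subtree is $T_{f_{|x_i\gets0}}$ and its right subtree is $T_{f_{|x_i\gets1}}$. The zero-depth of a decision tree is the maximum, over root-to-leaf paths, of the number of edges on the path that go to a left (0-) child. *)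

From Stdlib Require Import Reals.
From mathcomp Require Import all_boot.
Set Implicit Arguments. Unset Strict Implicit. Unset Printing Implicit Defensive.

Definition input n := {ffun 'I_n -> bool}.
Definition bfun n := input n -> bool.

Definition indic n (T : {set 'I_n}) : input n := [ffun i => i \in T].

(* Coefficient of the monomial prod_{i in S} x_i in the unique F_2-polynomial
   (algebraic normal form) of f: the Moebius transform
   c_f(S) = XOR_{T subset S} f(1_T). *)
Definition anf_coef n (f : bfun n) (S : {set 'I_n}) : bool :=
  \big[xorb/false]_(T : {set 'I_n} | T \subset S) f (indic T).

Definition anf n (f : bfun n) : {set {set 'I_n}} := [set S | anf_coef f S].

Definition psize n (f : bfun n) : nat := #|[set S in anf f | S != set0]|.

(* Restriction f_{|x_i <- b} (still a function of n variables, ignoring x_i). *)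
Definition restr n (f : bfun n) (i : 'I_n) (b : bool) : bfun n :=
  fun x => f [ffun j => if j == i then b else x j].

Inductive dtree (n : nat) : Type :=
| Leaf : bool -> dtree n
| Node : 'I_n -> dtree n -> dtree n -> dtree n.

Fixpoint dt_eval n (t : dtree n) (x : input n) : bool :=
  match t with
  | Leaf b => b
  | Node i l r => if x i then dt_eval r x else dt_eval l x
  end.

Fixpoint depth n (t : dtree n) : nat :=
  match t with
  | Leaf _ => 0
  | Node _ l r => (maxn (depth l) (depth r)).+1
  end.

Fixpoint zero_depth n (t : dtree n) : nat :=
  match t with
  | Leaf _ => 0
  | Node _ l r => maxn (zero_depth l).+1 (zero_depth r)
  end.

Definition is_const n (f : bfun n) (xi : bool) : Prop := forall x, f x = xi.

Definition chosen_var n (f : bfun n) (i : 'I_n) : Prop :=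
  (forall j : 'I_n, psize (restr f i false) <= psize (restr f j false)) /\
  (forall j : 'I_n, j < i -> psize (restr f i false) < psize (restr f j false)).

(* Graph of the recursive definition of T_f:  Tf f t  <->  t = T_f. *)
Inductive Tf n : bfun n -> dtree n -> Prop :=
| Tf_leaf (f : bfun n) (xi : bool) :
    is_const f xi -> Tf f (Leaf n xi)
| Tf_node (f : bfun n) (i : 'I_n) (t0 t1 : dtree n) :
    (forall xi, ~ is_const f xi) -> chosen_var f i ->
    Tf (restr f i false) t0 -> Tf (restr f i true) t1 ->
    Tf f (Node i t0 t1).

From Stdlib Require Import Reals Lra ZArith.
From mathcomp Require Import all_boot zify.
Set Implicit Arguments. Unset Strict Implicit. Unset Printing Implicit Defensive.

(* Let t be a depth-d tree computing f and s = psize f.  Setting the at most d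
   variables on the leftmost path of t to 0 makes f constant, so every
   non-constant monomial of f contains one of them; some variable therefore
   occurs in at least s/d monomials, and the greedy choice of T_f guarantees
   psize f_{x_i <- 0} <= (1 - 1/d) s.  Restrictions keep depth <= d and setting a
   variable to 1 never increases psize, so a path of T_f with k 0-edges forces
   s (1 - 1/d)^(k-1) >= 1.  Hence zero_depth T_f <= k whenever
   s (d - 1)^k < d^k, which holds for k = ceil(d ln s) since
   1 - 1/d <= exp(-1/d). *)

Section Finsets.
Variable T : finType.
Implicit Types (j k : T) (S U : {set T}).

Definition toggle j S := if j \in S then S :\ j else j |: S.

Lemma mem_toggle j S : (j \in toggle j S) = (j \notin S).
Proof. by rewrite /toggle; case: ifP => jS; rewrite !inE eqxx ?jS. Qed.

Lemma mem_toggle_neq j k S : k != j -> (k \in toggle j S) = (k \in S).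
Proof. by move=> kj; rewrite /toggle; case: ifP => _; rewrite !inE (negbTE kj). Qed.

Lemma toggleK j : involutive (toggle j).
Proof.
move=> S; rewrite [toggle j (toggle j S)]/toggle mem_toggle /toggle.
by case: (boolP (j \in S)) => jS /=; [rewrite setD1K | rewrite setU1K].
Qed.

Lemma toggle_inj j : injective (toggle j).
Proof. exact: inv_inj (toggleK j). Qed.

Lemma toggle_subset j S U : j \in S -> (toggle j U \subset S) = (U \subset S).
Proof.
move=> jS; rewrite /toggle; case: ifP => jU; last by rewrite subUset sub1set jS.
apply/idP/idP => [sUS | ]; last exact: subset_trans (subD1set _ _).
by rewrite -(setD1K jU) subUset sub1set jS.
Qed.

Lemma subset_toggle j S U : j \notin U -> (U \subset toggle j S) = (U \subset S).
Proof.
move=> jU; have neq_j k : k \in U -> k != j by apply: contraTneq => ->.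
by apply/subsetP/subsetP => sUS k kU; move: (sUS k kU); rewrite mem_toggle_neq ?neq_j.
Qed.

Lemma subsetU1_notin j S U :
  j \notin S -> (U \subset j |: S) && (j \notin U) = (U \subset S).
Proof.
move=> jS; apply/idP/idP => [/andP[/subsetP sUjS jU] | /subsetP sUS].
  apply/subsetP => k kU; have := sUjS k kU; rewrite !inE => /orP[/eqP kj|//].
  by rewrite -kj kU in jU.
rewrite (contra (sUS j)) ?andbT //.
by apply/subsetP => k /sUS kS; rewrite !inE kS orbT.
Qed.

(* A fixed-point-free involution pairs up the terms of a sum in characteristic 2. *)
Lemma big_addb_toggle j (P : pred {set T}) (F : {set T} -> bool) :
  (forall S, P (toggle j S) = P S) -> (forall S, F (toggle j S) = F S) ->
  \big[addb/false]_(S | P S) F S = false.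
Proof.
move=> Ptog Ftog; rewrite (bigID (fun S => j \in S)) /=.
rewrite [X in addb X _](reindex_inj (@toggle_inj j)) /=.
rewrite (eq_big (fun S => P S && (j \notin S)) F) ?addbb // => S.
by rewrite Ptog mem_toggle.
Qed.

Lemma moebius_addb (g : {set T} -> bool) S :
  \big[addb/false]_(U : {set T} | U \subset S)
    \big[addb/false]_(V : {set T} | V \subset U) g V = g S.
Proof.
rewrite (exchange_big_dep (fun V : {set T} => V \subset S)) /=; last first.
  by move=> U V sUS sVU; apply: subset_trans sVU sUS.
rewrite (bigD1 S) //= (big_pred1 S); last by move=> U; rewrite /= eqEsubset.
rewrite big1 ?addbF // => V /andP[sVS neVS].
have /properP[_ [j jS jV]] : V \proper S by rewrite properEneq neVS.
by apply: (big_addb_toggle (j := j)) => // U; rewrite toggle_subset // subset_toggle.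
Qed.

Lemma card_setI_sum S U : #|S :&: U| = \sum_(k in U) (k \in S).
Proof.
rewrite -sum1_card (eq_bigl (fun k => (k \in U) && (k \in S))); last first.
  by move=> k; rewrite !inE andbC.
by rewrite big_mkcondr /=; apply: eq_bigr => k _; case: (k \in S).
Qed.

End Finsets.

Section AlgebraicNormalForm.
Variable n : nat.
Implicit Types (f : bfun n) (i : 'I_n) (S T U P : {set 'I_n}).

Lemma anf_coefE f S :
  anf_coef f S = \big[addb/false]_(T : {set 'I_n} | T \subset S) f (indic T).
Proof.
by apply: (big_ind2 (fun a b => a = b)) => // a1 a2 b1 b2 -> ->; case: a2; case: b2.
Qed.

Lemma indic_support (x : input n) : x = indic [set j | x j].
Proof. by apply/ffunP => j; rewrite ffunE inE. Qed.

Lemma anf_indic f T :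
  f (indic T) = \big[addb/false]_(U : {set 'I_n} | U \subset T) anf_coef f U.
Proof.
rewrite -(moebius_addb (fun U => f (indic U))).
by apply: eq_bigr => U _; rewrite anf_coefE.
Qed.

Lemma anf_coef_const f xi S : is_const f xi -> S != set0 -> anf_coef f S = false.
Proof.
move=> fxi /set0Pn[j jS]; rewrite anf_coefE.
by apply: (big_addb_toggle (j := j)) => U; rewrite ?toggle_subset ?fxi.
Qed.

Definition zero_on f P : bfun n :=
  fun x => f [ffun j => if j \in P then false else x j].

Lemma zero_on_indic f P T : zero_on f P (indic T) = f (indic (T :\: P)).
Proof. by congr f; apply/ffunP => j; rewrite !ffunE !inE; case: (j \in P). Qed.

Lemma anf_coef_zero_on f P S :
  anf_coef (zero_on f P) S = [disjoint S & P] && anf_coef f S.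
Proof.
rewrite -setI_eq0 !anf_coefE; case: eqP => [SP0 | /eqP/set0Pn[j]].
  apply: eq_bigr => T sTS; rewrite zero_on_indic; congr (f (indic _)).
  apply/setP => k; rewrite !inE; case kT: (k \in T); rewrite ?andbF ?andbT //.
  apply/negP => kP; have : k \in S :&: P by rewrite inE (subsetP sTS k kT).
  by rewrite SP0 inE.
rewrite inE => /andP[jS jP].
apply: (big_addb_toggle (j := j)) => U; first exact: toggle_subset.
rewrite !zero_on_indic; congr (f (indic _)); apply/setP => k; rewrite !inE.
by case: (eqVneq k j) => [->|kj]; rewrite ?jP // mem_toggle_neq.
Qed.

Lemma anf_coef_restr0 f i S :
  anf_coef (restr f i false) S = (i \notin S) && anf_coef f S.
Proof.
rewrite -disjoints1 disjoint_sym -anf_coef_zero_on !anf_coefE.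
by apply: eq_bigr => T _; congr f; apply/ffunP => j; rewrite !ffunE inE.
Qed.

Lemma anf_coef_restr1_mem f i S : i \in S -> anf_coef (restr f i true) S = false.
Proof.
move=> iS; rewrite anf_coefE.
apply: (big_addb_toggle (j := i)) => U; first exact: toggle_subset.
congr f; apply/ffunP => j; rewrite !ffunE.
by case: eqP => // /eqP ji; rewrite mem_toggle_neq.
Qed.

Lemma anf_coef_setU1 f i S : i \notin S ->
  anf_coef f (i |: S) = anf_coef f S (+) anf_coef (restr f i true) S.
Proof.
move=> iS; rewrite !anf_coefE (bigID (fun T => i \in T)) /= addbC.
congr addb; first by apply: eq_bigl => T; rewrite subsetU1_notin.
rewrite (reindex_inj (@toggle_inj _ i)) /=.
apply: eq_big => T; rewrite mem_toggle /toggle; case: ifP => iT /=.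
- rewrite andbF; apply/esym/negP => /subsetP sTS.
  by rewrite (sTS i iT) in iS.
- by rewrite andbT subUset sub1set setU11 /= -(subsetU1_notin _ iS) iT andbT.
- by rewrite andbF.
- move=> _; congr f; apply/ffunP => j; rewrite !ffunE !inE.
  by case: eqP.
Qed.

End AlgebraicNormalForm.

Section Monomials.
Variable n : nat.
Implicit Types (f : bfun n) (i : 'I_n) (S : {set 'I_n}).

Definition monomials f := [set S in anf f | S != set0].

Lemma psizeE f : psize f = #|monomials f|. Proof. by []. Qed.

Lemma in_monomials f S : (S \in monomials f) = anf_coef f S && (S != set0).
Proof. by rewrite !inE. Qed.

Lemma psize_eq0_const f : psize f = 0 -> is_const f (anf_coef f set0).
Proof.
move=> /cards0_eq mon0 x; rewrite (indic_support x) anf_indic.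
rewrite (bigD1 set0) ?sub0set //= big1 ?addbF // => U /andP[_ U0].
apply/negbTE/negP => cU.
by have := in_set0 U; rewrite -mon0 in_monomials cU U0.
Qed.

Lemma const_psize_eq0 f xi : is_const f xi -> psize f = 0.
Proof.
move=> fxi; apply: eq_card0 => S; rewrite in_monomials.
by case: (eqVneq S set0) => [|S0]; rewrite ?andbF // (anf_coef_const fxi S0).
Qed.

Definition occ f i := #|monomials f :&: [set S : {set 'I_n} | i \in S]|.

Lemma monomials_restr0 f i :
  monomials (restr f i false) = monomials f :\: [set S : {set 'I_n} | i \in S].
Proof.
by apply/setP => S; rewrite !inE anf_coef_restr0 -!andbA; congr andb; rewrite andbC.
Qed.

Lemma psize_restr0 f i : psize (restr f i false) = psize f - occ f i.
Proof.
rewrite !psizeE monomials_restr0 /occ.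
by rewrite -(cardsID [set S : {set 'I_n} | i \in S] (monomials f)) addKn.
Qed.

Lemma monomials_restr1 f i S : S \in monomials (restr f i true) ->
  i \notin S /\ ((S \in monomials f) || (i |: S \in monomials f)).
Proof.
rewrite !in_monomials => /andP[cS S0].
have iS : i \notin S by apply: contraTN cS => iS; rewrite anf_coef_restr1_mem.
have iS0 : i |: S != set0 by apply/set0Pn; exists i; rewrite setU11.
split=> //; rewrite S0 iS0 !andbT anf_coef_setU1 //.
by move: cS; case: (anf_coef f S); case: (anf_coef _ S).
Qed.

Lemma psize_restr1 f i : psize (restr f i true) <= psize f.
Proof.
rewrite !psizeE; apply: leq_trans (leq_imset_card (fun S => S :\ i) _).
apply/subset_leq_card/subsetP => S /monomials_restr1[iS /orP[mS | miS]].
  apply/imsetP; exists S => //; apply/setP => k; rewrite !inE.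
  by case: (eqVneq k i) => [->|]; rewrite ?(negbTE iS).
by apply/imsetP; exists (i |: S); rewrite ?setU1K.
Qed.

Definition vars f := \bigcup_(S in monomials f) S.

Lemma vars_restr f i b : vars (restr f i b) \subset vars f :\ i.
Proof.
apply/subsetP => k /bigcupP[S mS kS].
have [iS mS'] : i \notin S /\ exists2 U, U \in monomials f & S \subset U.
  case: b mS => [/monomials_restr1[iS /orP[mS|mS]]|]; split=> //.
  - by exists S.
  - by exists (i |: S) => //; apply: subsetUr.
  - by move: mS; rewrite monomials_restr0 !inE => /andP[].
  - by exists S => //; move: mS; rewrite monomials_restr0 !inE => /andP[].
have [U mU sSU] := mS'.
rewrite !inE; apply/andP; split; first by apply: contraNneq iS => <-.
by apply/bigcupP; exists U => //; apply: (subsetP sSU).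
Qed.

Lemma psize_restr0_id f i : i \notin vars f -> psize (restr f i false) = psize f.
Proof.
move=> iv; rewrite psize_restr0 -[RHS]subn0; congr subn; apply: eq_card0 => S.
apply/negP => /setIP[mS]; rewrite inE => iS.
by apply: (negP iv); apply/bigcupP; exists S.
Qed.

Lemma card_vars_restr f i b : i \in vars f -> #|vars (restr f i b)| < #|vars f|.
Proof.
move=> iv; rewrite (cardsD1 i (vars f)) iv add1n ltnS.
exact: subset_leq_card (vars_restr f i b).
Qed.

End Monomials.

Section DecisionTrees.
Variable n : nat.
Implicit Types (f : bfun n) (i : 'I_n) (t : dtree n) (d : nat) (x : input n).

Fixpoint dt_restr t i b : dtree n :=
  match t with
  | Leaf c => Leaf n c
  | Node j l r => if j == i then dt_restr (if b then r else l) i b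
                  else Node j (dt_restr l i b) (dt_restr r i b)
  end.

Lemma dt_eval_restr t i b x :
  dt_eval (dt_restr t i b) x = dt_eval t [ffun j => if j == i then b else x j].
Proof.
elim: t => [//|j l IHl r IHr] /=; rewrite ffunE.
case: eqP => _ /=; last by rewrite IHl IHr.
by case: b in IHl IHr *.
Qed.

Lemma depth_restr t i b : depth (dt_restr t i b) <= depth t.
Proof.
elim: t => [//|j l IHl r IHr] /=.
case: eqP => _ /=; last by rewrite ltnS geq_max !leq_max IHl IHr orbT.
by apply: leqW; case: b in IHl IHr *; rewrite leq_max ?IHl ?IHr ?orbT.
Qed.

Definition dt_depth_le f d := exists t, depth t <= d /\ dt_eval t =1 f.

Lemma dt_depth_le_restr f d i b :
  dt_depth_le f d -> dt_depth_le (restr f i b) d.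
Proof.
case=> t [dt tf]; exists (dt_restr t i b); split.
  exact: leq_trans (depth_restr t i b) dt.
by move=> x; rewrite dt_eval_restr tf.
Qed.

Fixpoint zero_path t : {set 'I_n} :=
  if t is Node j l _ then j |: zero_path l else set0.

Fixpoint zero_leaf t : bool :=
  match t with Leaf c => c | Node _ l _ => zero_leaf l end.

Lemma dt_eval_zero_path t x :
  (forall j, j \in zero_path t -> x j = false) -> dt_eval t x = zero_leaf t.
Proof.
elim: t => [//|j l IHl r _] /= x0; rewrite x0 ?setU11 // IHl // => k kl.
by rewrite x0 // inE kl orbT.
Qed.

Lemma card_zero_path t : #|zero_path t| <= depth t.
Proof.
elim: t => [|j l IHl r _] /=; first by rewrite cards0.
by rewrite cardsU1 -add1n leq_add ?leq_b1 // (leq_trans IHl) ?leq_maxl.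
Qed.

(* Zeroing the variables of the leftmost path makes f constant, so no
   monomial can avoid that path. *)
Lemma monomial_meets_zero_path f t S :
  dt_eval t =1 f -> S \in monomials f -> ~~ [disjoint S & zero_path t].
Proof.
move=> tf; rewrite in_monomials => /andP[cS S0].
have zf : is_const (zero_on f (zero_path t)) (zero_leaf t).
  by move=> x; rewrite /zero_on -tf; apply: dt_eval_zero_path => j jP; rewrite ffunE jP.
by have := anf_coef_const zf S0; rewrite anf_coef_zero_on cS andbT => ->.
Qed.

Lemma depth_gt0 f t : dt_eval t =1 f -> 0 < psize f -> 0 < depth t.
Proof.
case: t => [c tf|//]; suff -> : psize f = 0 by [].
by apply: (@const_psize_eq0 _ _ c) => x; rewrite -tf.
Qed.

(* Double counting over the leftmost path: each monomial contains one of
   its at most d variables, so one of them occurs in a 1/d fraction. *)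
Lemma exists_psize_restr0_le f d : dt_depth_le f d -> 0 < psize f ->
  exists i, d * psize (restr f i false) <= (d - 1) * psize f.
Proof.
move=> [t [dt tf]] s_gt0; set P := zero_path t.
have sum_occ : psize f <= \sum_(i in P) occ f i.
  rewrite psizeE -sum1_card.
  apply: (@leq_trans (\sum_(S in monomials f) #|S :&: P|)).
    by apply: leq_sum => S mS; rewrite card_gt0 setI_eq0 (monomial_meets_zero_path tf).
  rewrite (eq_bigr _ (fun S _ => card_setI_sum S P)) exchange_big /=.
  apply: leq_sum => i _; rewrite /occ setIC card_setI_sum.
  by apply: eq_leq; apply: eq_bigr => S _; rewrite inE.
have [S mS] : exists S, S \in monomials f by apply/set0Pn; rewrite -card_gt0.
have [j0 j0P] : exists j0, j0 \in P.
  have := monomial_meets_zero_path tf mS; rewrite -setI_eq0 => /set0Pn[j].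
  by rewrite inE => /andP[_ jP]; exists j.
have [i iP occ_max] := @arg_maxnP _ j0 (mem P) (occ f) j0P.
exists i; rewrite psize_restr0 mulnBr mulnBl mul1n leq_sub2l //.
apply: (leq_trans sum_occ); apply: (@leq_trans (\sum_(k in P) occ f i)).
  exact: leq_sum.
by rewrite sum_nat_const leq_mul2r (leq_trans (card_zero_path t)) ?orbT.
Qed.

End DecisionTrees.

Section GreedyTree.
Variable n : nat.
Implicit Types (f : bfun n) (i : 'I_n) (d k : nat).

(* Minimizing [psize * n + index] is minimizing lexicographically. *)
Lemma chosen_var_exists f (j0 : 'I_n) : exists i, chosen_var f i.
Proof.
pose key i := psize (restr f i false) * n + i.
have [i _ key_min] := @arg_minnP _ j0 predT key isT.
exists i; split=> [j | j ji]; have := key_min j isT; rewrite /key;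
  have := ltn_ord i; have := ltn_ord j; nia.
Qed.

Lemma psize_restr0_chosen f d i : dt_depth_le f d -> chosen_var f i ->
  d * psize (restr f i false) <= (d - 1) * psize f.
Proof.
move=> fd [i_min _]; case: (posnP (psize f)) => [s0 | s_gt0].
  by rewrite psize_restr0 s0 sub0n !muln0.
have [j le_j] := exists_psize_restr0_le fd s_gt0.
exact: leq_trans (leq_mul (leqnn d) (i_min j)) le_j.
Qed.

(* Induction on the number of variables: the chosen variable occurs in f,
   so both restrictions of f lose it. *)
Lemma Tf_zero_depth_le f d k : dt_depth_le f d ->
  psize f * (d - 1) ^ k < d ^ k -> exists T, Tf f T /\ zero_depth T <= k.
Proof.
have [m] := ubnP #|vars f|; elim: m f k => // m IH f k lt_vars fd budget.
case: (posnP (psize f)) => [s0 | s_gt0].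
  by exists (Leaf n (anf_coef f set0)); split; [apply/Tf_leaf/psize_eq0_const|].
case: k budget => [|k] budget; first by rewrite expn0 muln1 ltnS leqn0 in budget; nia.
have d_gt0 : 0 < d.
  by move: budget; rewrite lt0n; apply: contraTneq => ->; rewrite exp0n.
have [S mS] : exists S, S \in monomials f by apply/set0Pn; rewrite -card_gt0.
have [j0 _] : exists j0, j0 \in S by apply/set0Pn; case/setIdP: mS.
have [i chosen_i] := chosen_var_exists f j0.
have le_i := psize_restr0_chosen fd chosen_i.
have lt_i : psize (restr f i false) < psize f by nia.
have vars_i : i \in vars f by apply: contraTT lt_i => /psize_restr0_id ->; rewrite ltnn.
have [T0 [Tf0 z0]] : exists T, Tf (restr f i false) T /\ zero_depth T <= k.
  apply: IH (dt_depth_le_restr i false fd) _.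
    exact: leq_trans (card_vars_restr false vars_i) _.
  rewrite -(ltn_pmul2l d_gt0) mulnA -expnS; apply: leq_ltn_trans budget.
  by rewrite expnS mulnA [psize f * _]mulnC leq_mul2r le_i orbT.
have [T1 [Tf1 z1]] : exists T, Tf (restr f i true) T /\ zero_depth T <= k.+1.
  apply: IH (dt_depth_le_restr i true fd) _.
    exact: leq_trans (card_vars_restr true vars_i) _.
  exact: leq_ltn_trans (leq_mul (psize_restr1 f i) (leqnn _)) budget.
exists (Node i T0 T1); split; last by rewrite /= geq_max z1 ltnS z0.
apply: Tf_node => // xi /const_psize_eq0 s0.
by rewrite s0 in s_gt0.
Qed.

End GreedyTree.

Section RealBound.
Local Open Scope R_scope.

Lemma INR_expn m k : INR (m ^ k) = INR m ^ k.
Proof. by elim: k => [//|k IH]; rewrite expnS mulnE mult_INR IH. Qed.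

Lemma exp_INR_mul k x : exp (INR k * x) = exp x ^ k.
Proof.
elim: k => [|k IH]; first by rewrite Rmult_0_l exp_0.
by rewrite S_INR Rmult_plus_distr_r Rmult_1_l exp_plus IH /= Rmult_comm.
Qed.

(* (1 - 1/d)^k <= exp(-k/d) < 1/s as soon as k > d ln s. *)
Lemma budget_of_ln (d s k : nat) : (0 < d)%N -> (0 < s)%N ->
  INR d * ln (INR s) < INR k -> (s * (d - 1) ^ k < d ^ k)%N.
Proof.
case: d => [//|d] _ s_gt0 k_gt; rewrite subn1 /=.
apply/ltP/INR_lt; rewrite mulnE mult_INR !INR_expn.
have s_pos : 0 < INR s by apply: (lt_INR 0); apply/ltP.
set D := INR d.+1 in k_gt *; have D_ge1 : 1 <= D by apply: (le_INR 1); apply/leP.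
have -> : INR d = (1 - / D) * D by rewrite /D S_INR; field; have := pos_INR d; lra.
have decay : (1 - / D) ^ k <= exp (INR k * - / D).
  rewrite exp_INR_mul; apply: pow_incr; split; last exact: exp_ineq1_le.
  by have := Rinv_le_contravar _ _ Rlt_0_1 D_ge1; rewrite Rinv_1; lra.
have small : INR s * exp (INR k * - / D) < 1.
  rewrite -{1}(exp_ln _ s_pos) -exp_plus -exp_0; apply: exp_increasing.
  have : ln (INR s) < INR k * / D.
    apply: (Rmult_lt_reg_l D); first lra.
    by rewrite (Rmult_comm (INR k)) -Rmult_assoc Rinv_r; lra.
  lra.
have D_pow : 0 < D ^ k by apply: pow_lt; lra.
rewrite Rpow_mult_distr -Rmult_assoc -{2}(Rmult_1_l (D ^ k)).
apply: Rmult_lt_compat_r => //; apply: Rle_lt_trans small.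
by apply: Rmult_le_compat_l; lra.
Qed.

Lemma exists_budget (d s : nat) : (0 < d)%N -> (0 < s)%N ->
  exists k, (s * (d - 1) ^ k < d ^ k)%N /\ INR k <= INR d * ln (INR s) + 1.
Proof.
move=> d_gt0 s_gt0; set x := INR d * ln (INR s).
have x_ge0 : 0 <= x.
  apply: Rmult_le_pos; first exact: pos_INR.
  have s_ge1 : 1 <= INR s by apply: (le_INR 1); apply/leP.
  have [s_gt1 | <-] := Rle_lt_or_eq_dec _ _ s_ge1.
    by rewrite -ln_1; left; apply: ln_increasing; lra.
  by rewrite ln_1; lra.
have [up_gt up_le] := archimed x.
have up_ge0 : (0 <= up x)%Z by apply: le_IZR; lra.
have k_up : INR (Z.to_nat (up x)) = IZR (up x) by rewrite INR_IZR_INZ Z2Nat.id.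
exists (Z.to_nat (up x)); rewrite k_up; split; last lra.
by apply: budget_of_ln; rewrite // k_up.
Qed.

End RealBound.

Theorem mainTheorem20 (n : nat) (f : bfun n) (d : nat) :
  1 <= psize f ->
  (exists t : dtree n, depth t = d /\ forall x, dt_eval t x = f x) ->
  exists T : dtree n, Tf f T /\
    Rle (INR (zero_depth T)) (Rplus (Rmult (INR d) (ln (INR (psize f)))) (INR 1)).
Proof.
move=> s_gt0 [t [<- tf]].
have fd : dt_depth_le f (depth t) by exists t.
have [k [budget k_le]] := exists_budget (depth_gt0 tf s_gt0) s_gt0.
have [T [TfT zT]] := Tf_zero_depth_le fd budget.
exists T; split=> //; apply: Rle_trans k_le; exact/le_INR/leP.
Qed.
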